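(* Let $a_1>0$ and $a_1^2+4a_2<0$, and let $X$ be the AR(2)-process with these coefficients. Assume $\mathbb{P}(Y_1>0)>0$. Then there exists $\lambda>0$ such that $\mathbb{P}(\sup_{n=1,\dots,N}X_n\le0)\precsim\exp(-\lambda N)$ as $N\to\infty$.
   Context: Let $(Y_n)_{n\ge1}$ be i.i.d. nondegenerate real random variables. The AR(2)-process is $X_n=a_1X_{n-1}+a_2X_{n-2}+Y_n$ for $n\ge1$ with $X_n=0$ for $n\le0$. $f\precsim g$ means $\limsup_{N\to\infty} f(N)/g(N)<\infty$. *)

From mathcomp Require Import all_boot all_order all_algebra.
From mathcomp Require Import all_classical all_reals all_analysis.
Set Implicit Arguments. Unset Strict Implicit. Unset Printing Implicit Defensive.
Import Order.TTheory GRing.Theory Num.Theory.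
Local Open Scope classical_set_scope.
Local Open Scope ring_scope.

Definition mutually_independent d (T : measurableType d) (R : realType)
  (P : probability T R) (Y : nat -> {RV P >-> R}) : Prop :=
  forall (J : seq nat) (B : nat -> set R),
    uniq J -> (forall j, j \in J -> measurable (B j)) ->
    P (\bigcap_(j in [set j | j \in J]) (Y j @^-1` B j)) =
    (\prod_(j <- J) P (Y j @^-1` B j))%E.

Definition identically_distributed d (T : measurableType d) (R : realType)
  (P : probability T R) (Y : nat -> {RV P >-> R}) : Prop :=
  forall n (B : set R), measurable B -> P (Y n @^-1` B) = P (Y 0%N @^-1` B).

Definition iid d (T : measurableType d) (R : realType)
  (P : probability T R) (Y : nat -> {RV P >-> R}) : Prop :=
  mutually_independent Y /\ identically_distributed Y.

Definition nondegenerate_rv d (T : measurableType d) (R : realType)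
  (P : probability T R) (X : {RV P >-> R}) : Prop :=
  forall c : R, (P (X @^-1` [set c]) < 1)%E.

(* AR(2) path driven by the innovations y : nat -> R, where y k plays the role
   of Y_{k+1}.  ar2 a1 a2 y n = X_n, with X_0 = X_{-1} = 0,
   X_1 = Y_1, X_{n+2} = a1 X_{n+1} + a2 X_n + Y_{n+2}. *)
Fixpoint ar2 (R : pzRingType) (a1 a2 : R) (y : nat -> R) (n : nat) : R :=
  match n with
  | 0 => 0
  | 1 => y 0%N
  | S ((S m) as m1) => a1 * ar2 a1 a2 y m1 + a2 * ar2 a1 a2 y m + y m1
  end.

(* The operator X |-> X_{m+2} - a1 X_{m+1} - a2 X_m sends the AR(2) path to
   its innovations. Composing the operator of x^2 - A x + B with the one of
   x^2 + A x + B squares the characteristic roots and doubles the step. Since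
   a1^2 + 4 a2 < 0 the roots are non-real, and after finitely many doublings the
   middle coefficient becomes nonpositive; then positivity of the operator forces
   one of the three sampled values of X to be positive. Hence there is a window
   length K such that K - 1 consecutive positive innovations make X positive in
   the window. If X_1, ..., X_N <= 0, none of the (N - 1) / K disjoint blocks of
   innovations is entirely positive, and by independence this has probability
   (1 - P(Y_1 > 0)^(K - 1))^((N - 1) / K). *)

From mathcomp Require Import all_boot all_order all_algebra.
From mathcomp Require Import all_classical all_reals all_analysis.
From mathcomp Require Import measurable_realfun.
From mathcomp Require Import zify ring lra.
Import Order.TTheory GRing.Theory Num.Theory.
Set Implicit Arguments. Unset Strict Implicit.
Local Open Scope classical_set_scope.
Local Open Scope ring_scope.

Definition twostep (R : pzRingType) (A B : R) h (X : nat -> R) m : R :=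
  X (m + 2 * h)%N - A * X (m + h)%N + B * X m.

(* Composition with the operator of x^2 + A x + B squares the roots of
   x^2 - A x + B, whence the coefficients A^2 - 2B and B^2. *)
Lemma twostep_double (R : comPzRingType) (A B : R) h X m :
  twostep (A ^+ 2 - 2 * B) (B ^+ 2) (2 * h) X m =
  twostep A B h X (m + 2 * h) + A * twostep A B h X (m + h) + B * twostep A B h X m.
Proof.
rewrite /twostep.
have -> : (m + 2 * h + 2 * h = m + 2 * (2 * h))%N by lia.
have -> : (m + 2 * h + h = m + h + 2 * h)%N by lia.
have -> : (m + h + h = m + 2 * h)%N by lia.
ring.
Qed.

Lemma twostep_ar2 (R : comPzRingType) (a1 a2 : R) y m :
  twostep a1 (- a2) 1 (ar2 a1 a2 y) m = y m.+1.
Proof. by rewrite /twostep muln1 addn1 addn2 /=; ring. Qed.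

Section TwoStepSign.
Variable R : realDomainType.
Implicit Types (A B t : R) (X : nat -> R).

Lemma twostep_double_gt0 A B h X m : 0 < A -> 0 <= B ->
  0 < twostep A B h X m -> 0 < twostep A B h X (m + h) ->
  0 < twostep A B h X (m + 2 * h) ->
  0 < twostep (A ^+ 2 - 2 * B) (B ^+ 2) (2 * h) X m.
Proof.
move=> A0 B0 Z0 Z1 Z2; rewrite twostep_double.
have : 0 < A * twostep A B h X (m + h) by rewrite mulr_gt0.
have : 0 <= B * twostep A B h X m by rewrite mulr_ge0 // ltW.
lra.
Qed.

Lemma twostep_nonpos_coef A B h X m : A <= 0 -> 0 <= B ->
  0 < twostep A B h X m -> exists2 j, (j <= 2 * h)%N & 0 < X (m + j)%N.
Proof.
rewrite /twostep => A0 B0 Z0.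
have [X2|] := ltrP 0 (X (m + 2 * h)%N); first by exists (2 * h)%N.
have [X1|] := ltrP 0 (X (m + h)%N); first by exists h => //; lia.
have [X0|] := ltrP 0 (X m); first by exists 0%N; rewrite ?addn0.
move=> X0 X1 X2.
have : 0 <= A * X (m + h)%N by rewrite mulr_le0.
have : B * X m <= 0 by rewrite mulr_ge0_le0.
lra.
Qed.

(* With c = A^2 / (4 B), the doubled operator has c' = (2 c - 1)^2, so
   1 - c' = 4 c (1 - c) >= 2 (1 - c) unless its middle coefficient is <= 0. *)
Lemma twostep_double_discr A B t : 0 <= B -> 0 <= t ->
  4 * B <= 2 * t * (4 * B - A ^+ 2) ->
  A ^+ 2 - 2 * B <= 0 \/ 4 * B ^+ 2 <= t * (4 * B ^+ 2 - (A ^+ 2 - 2 * B) ^+ 2).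
Proof.
move=> B0 t0 HA; have [|A2B] := lerP (A ^+ 2) (2 * B); first by left; lra.
right.
have h1 : 0 <= (A ^+ 2 - 2 * B) * (t * (4 * B - A ^+ 2)) by apply: mulr_ge0; nra.
have h2 : 0 <= B * (2 * t * (4 * B - A ^+ 2) - 4 * B) by apply: mulr_ge0; lra.
nra.
Qed.

Lemma twostep_window_pos k A B h X m : 0 <= B ->
  A <= 0 \/ 4 * B <= (2 ^ k)%:R * (4 * B - A ^+ 2) ->
  (forall j, (j + 2 * h <= 2 ^ k.+1 * h)%N -> 0 < twostep A B h X (m + j)) ->
  exists2 j, (j <= 2 ^ k.+1 * h)%N & 0 < X (m + j)%N.
Proof.
have window_ge h' k' : (2 * h' <= 2 ^ k'.+1 * h')%N.
  by rewrite leq_mul2r expnS leq_pmulr ?expn_gt0 ?orbT.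
elim: k A B h => [|k IH] A B h B0 HA Zpos.
  have A0 : A <= 0.
    case: HA => // HA; rewrite expn0 mulr1n mul1r in HA.
    by have := sqr_ge0 A; nra.
  have Z0 : 0 < twostep A B h X m by rewrite -[m]addn0; apply: Zpos.
  by have [j jle Xj] := twostep_nonpos_coef A0 B0 Z0; exists j.
have [A0|Apos] := lerP A 0.
  have Z0 : 0 < twostep A B h X m.
    by rewrite -[m]addn0; apply: Zpos; rewrite add0n window_ge.
  have [j jle Xj] := twostep_nonpos_coef A0 B0 Z0.
  by exists j => //; apply: leq_trans jle (window_ge _ _).
have HA' : 4 * B <= 2 * (2 ^ k)%:R * (4 * B - A ^+ 2).
  by case: HA => [|]; [lra | rewrite expnS natrM].
have h2h : (2 ^ k.+1 * (2 * h) = 2 ^ k.+2 * h)%N by rewrite mulnCA mulnA -expnS.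
rewrite -h2h; apply: (IH _ _ _ (sqr_ge0 B)).
  exact: twostep_double_discr B0 (ler0n _ _) HA'.
by move=> j; rewrite h2h => jle; apply: twostep_double_gt0 => //;
  rewrite -?addnA; apply: Zpos; lia.
Qed.
End TwoStepSign.

Lemma exists_pow2_ge (R : archiRealFieldType) (x u : R) : 0 < u ->
  exists k, x <= (2 ^ k)%:R * u.
Proof.
move=> u0; have [xu0|xu0] := ltrP (x / u) 0.
  by exists 0%N; move: xu0; rewrite ltr_pdivrMr // mul0r mul1r; lra.
exists (Num.bound (x / u)); rewrite -ler_pdivrMr //.
apply: (le_trans (ltW (archi_boundP xu0))); rewrite ler_nat.
exact/ltnW/ltn_expl.
Qed.

Lemma ar2_window_pos (R : archiRealFieldType) (a1 a2 : R) : a1 ^+ 2 + 4 * a2 < 0 ->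
  exists2 K, (0 < K)%N & forall y m,
    (forall j, (j + 2 <= K)%N -> 0 < y (m + j).+1) ->
    exists2 j, (j <= K)%N & 0 < ar2 a1 a2 y (m + j).
Proof.
move=> discr; have a2le0 : 0 <= - a2 by have := sqr_ge0 a1; lra.
have [k Hk] : exists k, 4 * - a2 <= (2 ^ k)%:R * (4 * - a2 - a1 ^+ 2).
  by apply: exists_pow2_ge; lra.
exists (2 ^ k.+1)%N; first by rewrite expn_gt0.
move=> y m ypos.
have [|j] := twostep_window_pos (X := ar2 a1 a2 y) (h := 1) (m := m) a2le0 (or_intror Hk);
  rewrite ?muln1; last by exists j.
by move=> j /ypos; rewrite twostep_ar2.
Qed.

Lemma expr_divn_le_expR (R : realType) (r : R) K : 0 <= r < 1 -> (0 < K)%N ->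
  exists2 lambda, 0 < lambda &
    exists C, forall N, r ^+ (N.-1 %/ K) <= C * expR (- lambda * N%:R).
Proof.
move=> /andP[r0 r1] K0; set rho := (1 + r) / 2.
have rho0 : 0 < rho by rewrite /rho; lra.
have rho1 : rho < 1 by rewrite /rho; lra.
have lnrho : ln rho < 0 by apply: ln_lt0; rewrite rho0 rho1.
have K0R : 0 < K%:R :> R by rewrite ltr0n.
exists (- ln rho / K%:R); first by rewrite divr_gt0 // oppr_gt0.
exists rho^-1 => N; set M := (N.-1 %/ K)%N.
have NMK : (N%:R : R) <= M.+1%:R * K%:R.
  by rewrite -natrM ler_nat; have := ltn_ceil N.-1 K0; lia.
apply: (@le_trans _ _ (rho ^+ M)).
  by apply: lerXn2r; rewrite ?nnegrE ?(ltW rho0) // /rho; lra.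
rewrite -[rho ^+ M](mulKf (lt0r_neq0 rho0)) -exprS ler_wpM2l ?invr_ge0 ?(ltW rho0) //.
rewrite -[rho in rho ^+ _]lnK ?posrE // -expRM_natl ler_expR.
by rewrite !mulNr opprK mulrAC ler_pdivlMr //; nra.
Qed.

Section PositiveBlocks.
Context d (T : measurableType d) (R : realType) (P : probability T R).
Variable Y : nat -> {RV P >-> R}.
Implicit Types (J : seq nat) (K M : nat).

Lemma preimage_Y_pos j : Y j @^-1` `]0, +oo[ = [set w | 0 < Y j w].
Proof. by apply/seteqP; split => w /=; rewrite in_itv /= andbT. Qed.

Lemma measurable_Y_pos j : measurable [set w | 0 < Y j w].
Proof. by rewrite -preimage_Y_pos; apply: measurable_funPTI; exact: measurable_itv. Qed.

Definition all_pos J : set T := [set w | {in J, forall j, 0 < Y j w}].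

Lemma all_pos_bigcap J :
  all_pos J = \bigcap_(j in [set j | j \in J]) (Y j @^-1` `]0, +oo[).
Proof.
by apply/seteqP; split => w wJ j /wJ; rewrite preimage_Y_pos.
Qed.

Lemma measurable_all_pos J : measurable (all_pos J).
Proof.
rewrite all_pos_bigcap; apply: fin_bigcap_measurable; first exact: finite_seq.
by move=> j _; rewrite preimage_Y_pos; exact: measurable_Y_pos.
Qed.

Lemma all_pos_cat J J' : all_pos (J ++ J') = all_pos J `&` all_pos J'.
Proof.
apply/seteqP; split => w.
  by move=> wJJ'; split => j jJ; apply: wJJ'; rewrite mem_cat jJ ?orbT.
by move=> [wJ wJ'] j; rewrite mem_cat => /orP[/wJ|/wJ'].
Qed.

Lemma all_pos_nil : all_pos [::] = setT.
Proof. by apply/seteqP; split => w // _ j. Qed.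

(* [block K b] indexes the innovations driving [ar2] on the window
   [b K + 1, (b + 1) K + 1]. *)
Definition block K b : seq nat := iota (b * K + 2) K.-1.

Fixpoint no_pos_block K M : set T :=
  if M is M'.+1 then no_pos_block K M' `&` ~` all_pos (block K M') else setT.

Lemma measurable_no_pos_block K M : measurable (no_pos_block K M).
Proof.
elim: M => [|M IH] /=; first exact: measurableT.
exact/measurableI/measurableC/measurable_all_pos.
Qed.

Section AR2.
Variables (a1 a2 : R).

Definition ar2_nonpos_upto N : set T :=
  [set w | forall n, (1 <= n <= N)%N -> ar2 a1 a2 (fun k => Y k w) n <= 0].

Lemma measurable_ar2 n : measurable_fun setT (fun w => ar2 a1 a2 (fun k => Y k w) n).
Proof.
suff : measurable_fun setT (fun w => ar2 a1 a2 (fun k => Y k w) n) /\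
    measurable_fun setT (fun w => ar2 a1 a2 (fun k => Y k w) n.+1) by case.
elim: n => [|n [IH1 IH2]]; first by split; [exact: measurable_cst | exact: measurable_funPT].
split => //; apply: measurable_funD; last exact: measurable_funPT.
by apply: measurable_funD; apply: measurable_funM => //; exact: measurable_cst.
Qed.

Lemma measurable_ar2_nonpos_upto N : measurable (ar2_nonpos_upto N).
Proof.
have -> : ar2_nonpos_upto N = \bigcap_(n in [set n | n \in iota 1 N])
    ((fun w => ar2 a1 a2 (fun k => Y k w) n) @^-1` `]-oo, 0]).
  apply/seteqP; split => w wN n /=.
    by rewrite mem_iota in_itv /= => nN; apply: wN; lia.
  by move=> nN; have := wN n; rewrite /= mem_iota in_itv /=; apply; lia.
apply: fin_bigcap_measurable; first exact: finite_seq.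
by move=> n _; rewrite -[X in measurable X]setTI; apply: measurable_ar2.
Qed.

Lemma ar2_nonpos_upto_sub K M N :
  (forall y m, (forall j, (j + 2 <= K)%N -> 0 < y (m + j).+1) ->
    exists2 j, (j <= K)%N & 0 < ar2 a1 a2 y (m + j)) ->
  (M * K + 1 <= N)%N -> ar2_nonpos_upto N `<=` no_pos_block K M.
Proof.
move=> window; elim: M => [//|M IH] MKN w wN /=.
split; first by apply: IH => //; rewrite mulSn in MKN; lia.
move=> wpos; have [|j jK] := window (fun k => Y k w) (M * K).+1.
  by move=> j jK; apply: wpos; rewrite mem_iota; lia.
by apply/negP; rewrite -leNgt; apply: wN; rewrite mulSn in MKN; lia.
Qed.
End AR2.

Let p := fine (P [set w | 0 < Y 0%N w]).

Hypothesis iidY : iid Y.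

Lemma P_all_pos J : uniq J -> P (all_pos J) = (p ^+ size J)%:E.
Proof.
case: iidY => indepY identY uJ.
have PY j : P (Y j @^-1` `]0, +oo[) = p%:E.
  rewrite identY; last exact: measurable_itv.
  by rewrite preimage_Y_pos fineK // fin_num_measure //; exact: measurable_Y_pos.
rewrite all_pos_bigcap indepY //.
by rewrite (eq_bigr _ (fun j _ => PY j)) prodEFin big_const_seq count_predT iter_mulr_1.
Qed.

(* Generalised over a set [J] of later innovations so that the induction can
   split off the event that block [M] is positive. *)
Lemma P_all_pos_no_pos_block K M J : uniq J -> {in J, forall j, M * K < j}%N ->
  P (all_pos J `&` no_pos_block K M) = (p ^+ size J * (1 - p ^+ K.-1) ^+ M)%:E.
Proof.
elim: M J => [|M IH] J uJ Jgt; first by rewrite /= setIT P_all_pos // expr0 mulr1.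
have JMgt : {in J, forall j, M * K < j}%N by move=> j /Jgt; rewrite mulSn; lia.
have uJB : uniq (J ++ block K M).
  rewrite cat_uniq uJ iota_uniq andbT; apply/hasPn => j; rewrite mem_iota.
  by move=> jB; apply/negP => /Jgt; rewrite mulSn; lia.
have JBgt : {in J ++ block K M, forall j, M * K < j}%N.
  by move=> j; rewrite mem_cat mem_iota => /orP[/JMgt|] //; lia.
have mES : measurable (all_pos J `&` no_pos_block K M).
  exact/measurableI/measurable_no_pos_block/measurable_all_pos.
have : P (all_pos J `&` no_pos_block K M) =
    (P ((all_pos J `&` no_pos_block K M) `\` all_pos (block K M))
     + P (all_pos (J ++ block K M) `&` no_pos_block K M))%E.
  by rewrite all_pos_cat setIAC; apply: measureDI => //; exact: measurable_all_pos.
rewrite !IH //.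
have -> : all_pos J `&` no_pos_block K M.+1 =
    (all_pos J `&` no_pos_block K M) `\` all_pos (block K M).
  by rewrite /= setDE setIA.
rewrite -[P (_ `\` _)]fineK ?fin_num_measure //; last exact/measurableD/measurable_all_pos.
move: (fine _) => x; rewrite -EFinD => -[Hx]; congr EFin.
have -> : x = p ^+ size J * (1 - p ^+ K.-1) ^+ M
    - p ^+ size (J ++ block K M) * (1 - p ^+ K.-1) ^+ M by rewrite Hx; ring.
by rewrite size_cat size_iota exprD exprS; ring.
Qed.

Lemma P_no_pos_block K M : P (no_pos_block K M) = ((1 - p ^+ K.-1) ^+ M)%:E.
Proof.
by rewrite -[no_pos_block K M]setTI -all_pos_nil P_all_pos_no_pos_block // expr0 mul1r.
Qed.

End PositiveBlocks.

Theorem mainTheorem12 (d : measure_display) (T : measurableType d)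
  (R : realType) (P : probability T R) (Y : nat -> {RV P >-> R}) (a1 a2 : R) :
  iid Y -> nondegenerate_rv (Y 0%N) ->
  0 < a1 -> a1 ^+ 2 + 4 * a2 < 0 ->
  (0 < P [set w | (0 < Y 0%N w)%R])%E ->
  exists lambda : R, 0 < lambda /\
    exists C : R, exists N0 : nat, forall N : nat, (N0 <= N)%N ->
      (P [set w | forall n : nat, (1 <= n <= N)%N ->
                    (ar2 a1 a2 (fun k => Y k w) n <= 0)%R]
       <= (C * expR (- lambda * N%:R))%:E)%E.
Proof.
move=> iidY _ _ discr Ppos.
have [K K0 window] := ar2_window_pos discr.
set p := fine (P [set w | 0 < Y 0%N w]).
have Pp : P [set w | 0 < Y 0%N w] = p%:E.
  by rewrite fineK // fin_num_measure //; exact: measurable_Y_pos.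
have p0 : 0 < p by rewrite -lte_fin -Pp.
have p1 : p <= 1 by rewrite -lee_fin -Pp; apply/probability_le1/measurable_Y_pos.
have q0 : 0 <= 1 - p ^+ K.-1 < 1.
  by rewrite subr_ge0 exprn_ile1 ?(ltW p0) //= ltrBlDr ltrDl exprn_gt0.
have [lambda lambda0 [C decay]] := expr_divn_le_expR q0 K0.
exists lambda; split => //; exists C, 1%N => N N1.
apply: (@le_trans _ _ (P (no_pos_block Y K (N.-1 %/ K)))).
  apply: le_measure; rewrite ?inE.
  - exact: measurable_ar2_nonpos_upto.
  - exact: measurable_no_pos_block.
  - by apply: ar2_nonpos_upto_sub window _; have := leq_trunc_div N.-1 K; lia.
by rewrite P_no_pos_block // lee_fin.
Qed.
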